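(* If $\mathcal{F}=\{f_i\}_{i=1}^k$ is a frame for $\mathcal{H}_n$, then there exists $y\in\mathcal{H}_n$ such that $\operatorname{rob}(\mathcal{F})=\operatorname{rob}(\{\langle f_i,y\rangle\}_{i=1}^k)$, where the sequence of scalars $\{\langle f_i,y\rangle\}_{i=1}^k$ is regarded as a frame for the one-dimensional space of scalars (so its maximum robustness equals one less than the number of nonzero entries).
   Context: $\mathcal{H}_n$ is an $n$-dimensional real or complex Hilbert space. A finite sequence of vectors in a finite-dimensional Hilbert space is a frame for it iff it spans it. A frame $\{f_i\}_{i=1}^k$ is robust to $r$ erasures if for every index set $I\subseteq\{1,\dots,k\}$ with $|I|=r$, the sequence $\{f_i\}_{i\notin I}$ still spans the space. The maximum robustness $\operatorname{rob}(\mathcal{F})$ is the largest $r$ such that $\mathcal{F}$ is robust to $r$ erasures. *)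

From HB Require Import structures.
From mathcomp Require Import all_boot all_order all_algebra.
Set Implicit Arguments. Unset Strict Implicit. Unset Printing Implicit Defensive.
Import Order.TTheory GRing.Theory Num.Theory.
Local Open Scope ring_scope.

(* A finite sequence {f_i}_{i<k} of vectors of K^n is stored as the k x n
   matrix F whose i-th row is f_i. *)

Definition spans (K : fieldType) (k n : nat) (F : 'M[K]_(k, n)) (S : {set 'I_k}) : bool :=
  (1%:M <= \sum_(i in S) <<row i F>>)%MS.

Definition is_frame (K : fieldType) (k n : nat) (F : 'M[K]_(k, n)) : bool :=
  spans F setT.

Definition robust (K : fieldType) (k n : nat) (F : 'M[K]_(k, n)) (r : nat) : bool :=
  [forall I : {set 'I_k}, (#|I| == r) ==> spans F (~: I)].

(* maximum robustness: the largest r (0 <= r <= k) such that F is robust to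
   r erasures (only meaningful for frames, which are robust to 0 erasures) *)
Definition rob (K : fieldType) (k n : nat) (F : 'M[K]_(k, n)) : nat :=
  \max_(r < k.+1 | robust F r) r.

Definition ipR (R : realFieldType) (n : nat) (u v : 'rV[R]_n) : R :=
  \sum_(j < n) u 0 j * v 0 j.
Definition ipC (C : numClosedFieldType) (n : nat) (u v : 'rV[C]_n) : C :=
  \sum_(j < n) u 0 j * (v 0 j)^*.

(* the sequence of scalars {<f_i, y>}_i, as a k x 1 matrix (a sequence in the
   one-dimensional space of scalars) *)
Definition coeffsR (R : realFieldType) (k n : nat) (F : 'M[R]_(k, n)) (y : 'rV[R]_n)
  : 'M[R]_(k, 1) := \matrix_(i < k, j < 1) ipR (row i F) y.
Definition coeffsC (C : numClosedFieldType) (k n : nat) (F : 'M[C]_(k, n)) (y : 'rV[C]_n)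
  : 'M[C]_(k, 1) := \matrix_(i < k, j < 1) ipC (row i F) y.

From HB Require Import structures.
From mathcomp Require Import all_boot all_order all_algebra zify.
Set Implicit Arguments. Unset Strict Implicit. Unset Printing Implicit Defensive.
Import Order.TTheory GRing.Theory Num.Theory.
Local Open Scope ring_scope.

(* Let J be a non-spanning index set of largest size.  Robustness to r
   erasures only depends on #|J| (it holds iff #|J| < k - r), so it suffices
   to find y such that the scalars <f_i, y> vanish exactly on J.  Any nonzero
   y orthogonal to {f_i}_{i in J} works: if <f_i, y> = 0 for some i outside J,
   then y is orthogonal to J + i, which spans by maximality of J, so y = 0. *)

Definition largest_nonspanning (K : fieldType) (k n : nat) (F : 'M[K]_(k, n))
    (J : {set 'I_k}) : Prop :=
  ~~ spans F J /\ forall S, ~~ spans F S -> (#|S| <= #|J|)%N.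

Lemma exists_subset_card (T : finType) (A : {set T}) (t : nat) :
  (t <= #|A|)%N -> exists2 S : {set T}, S \subset A & #|S| = t.
Proof.
elim: t => [|t IH] Ht; first by exists set0; rewrite ?sub0set ?cards0.
have [S SA cS] := IH (ltnW Ht).
have : (0 < #|A :\: S|)%N by rewrite cardsD (setIidPr SA) cS subn_gt0.
case/card_gt0P => x; rewrite inE => /andP[xS xA].
by exists (x |: S); rewrite ?subUset ?sub1set ?xA ?SA // cardsU1 xS cS.
Qed.

Section Spans.

Variables (K : fieldType) (k n : nat) (F : 'M[K]_(k, n)).

Lemma spans_subset (S T : {set 'I_k}) : S \subset T -> spans F S -> spans F T.
Proof.
rewrite /spans => ST /submx_trans; apply; apply/sumsmx_subP => i iS.
exact: (sumsmx_sup i (subsetP ST i iS)).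
Qed.

Lemma robust_largest_nonspanning J r :
  largest_nonspanning F J -> (r <= k)%N -> robust F r = (#|J| < k - r)%N.
Proof.
move=> [nJ maxJ] rk; apply/forallP/idP => [robF | ltJ I].
  rewrite ltnNge; apply/negP => /exists_subset_card[S SJ cS].
  have := robF (~: S); rewrite cardsCs setCK card_ord cS subKn // eqxx /=.
  by move=> /(spans_subset SJ); apply/negP.
apply/implyP => /eqP cI; apply/negPn/negP => /maxJ.
by rewrite cardsCs setCK card_ord cI leqNgt ltJ.
Qed.

Lemma exists_largest_nonspanning : (0 < n)%N -> exists J, largest_nonspanning F J.
Proof.
move=> n_gt0; have nspan0 : ~~ spans F set0.
  rewrite /spans big_set0 submx0; apply/eqP => /matrixP.
  by move=> /(_ (Ordinal n_gt0) (Ordinal n_gt0)); rewrite !mxE eqxx; apply/eqP/oner_neq0.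
by case: (@arg_maxnP _ set0 (fun S => ~~ spans F S) (fun S => #|S|) nspan0) => J; exists J.
Qed.

Lemma exists_orthogonal_vector J :
  ~~ spans F J -> exists2 v : 'cV[K]_n, v != 0 & forall i, i \in J -> row i F *m v = 0.
Proof.
set A := (\sum_(i in J) <<row i F>>)%MS => nJ.
have rankA : (\rank A < n)%N.
  by move: nJ; rewrite /spans -/A sub1mx /row_full ltn_neqAle rank_leq_col andbT.
have [j cokerj] : exists j, col j (cokermx A) != 0.
  apply/existsP; apply: contraTT rankA; rewrite negb_exists => /forallP coker0.
  have /eqP : cokermx A = 0.
    by apply/matrixP => a b; move/eqP/colP/(_ a): (negbNE (coker0 b)); rewrite !mxE.
  by rewrite -mxrank_eq0 mxrank_coker; lia.
exists (col j (cokermx A)) => // i iJ.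
have /submxP[X ->] : (row i F <= A)%MS by rewrite (sumsmx_sup i) ?genmxE.
by rewrite colE mulmxA -(mulmxA X) mulmx_coker mulmx0 mul0mx.
Qed.

Lemma zeros_orthogonal_vector J (v : 'cV[K]_n) :
  largest_nonspanning F J -> v != 0 -> (forall i, i \in J -> row i F *m v = 0) ->
  [set i | (F *m v) i 0 == 0] = J.
Proof.
move=> [nJ maxJ] v_neq0 vJ; apply/setP => i; rewrite inE.
have -> : (F *m v) i 0 = (row i F *m v) 0 0 by rewrite -row_mul [RHS]mxE.
apply/idP/idP => [/eqP Fvi | iJ]; last by rewrite vJ ?mxE.
apply/negPn/negP => iJ.
have spans_iJ : spans F (i |: J) by apply/negPn/negP => /maxJ; rewrite cardsU1 iJ; lia.
have : (1%:M <= kermx v)%MS.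
  apply: submx_trans spans_iJ _; apply/sumsmx_subP => j; rewrite in_setU1 genmxE sub_kermx.
  case/orP => [/eqP -> | /vJ -> //].
  by apply/eqP/rowP => a; rewrite ord1 Fvi mxE.
by rewrite sub_kermx mul1mx (negPf v_neq0).
Qed.

End Spans.

Section Column.

Variables (K : fieldType) (k : nat) (c : 'M[K]_(k, 1)).

Lemma spans_col (S : {set 'I_k}) : spans c S = [exists i in S, c i 0 != 0].
Proof.
apply/idP/existsP => [spanS | [i /andP[iS ci]]].
  apply/existsP; apply: contraTT spanS; rewrite negb_exists_in => /forallP c0.
  rewrite /spans big1 ?submx0 ?oner_neq0 // => i iS.
  have /eqP ci0 := negbNE (implyP (c0 i) iS).
  by rewrite (_ : row i c = 0) ?genmx0 //; apply/rowP => j; rewrite ord1 !mxE ci0.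
apply: submx_trans (sumsmx_sup i iS (submx_refl _)).
rewrite genmxE sub1mx /row_full eqn_leq rank_leq_col lt0n mxrank_eq0.
by apply: contra ci => /eqP/matrixP/(_ 0 0); rewrite !mxE => ->.
Qed.

Lemma largest_nonspanning_col : largest_nonspanning c [set i | c i 0 == 0].
Proof.
have nspanE S : ~~ spans c S = (S \subset [set i | c i 0 == 0]).
  rewrite spans_col negb_exists_in; apply/forallP/subsetP => [c0 i iS | Sc i].
    by rewrite inE; apply/negbNE/(implyP (c0 i)).
  by apply/implyP => /Sc; rewrite inE => ->.
by split=> [|S]; rewrite nspanE // => /subset_leq_card.
Qed.

End Column.

Lemma rob_largest_nonspanning (K : fieldType) (k n m : nat)
    (F : 'M[K]_(k, n)) (G : 'M[K]_(k, m)) (J : {set 'I_k}) :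
  largest_nonspanning F J -> largest_nonspanning G J -> rob F = rob G.
Proof.
move=> FJ GJ; apply: eq_bigl => r; have rk := ltnSE (ltn_ord r).
by rewrite (robust_largest_nonspanning FJ rk) (robust_largest_nonspanning GJ rk).
Qed.

Lemma exists_rob_preserving_functional (K : fieldType) (k n : nat) (F : 'M[K]_(k, n)) :
  (0 < n)%N -> is_frame F -> exists v : 'cV[K]_n, is_frame (F *m v) /\ rob F = rob (F *m v).
Proof.
move=> n_gt0 frameF; have [J FJ] := exists_largest_nonspanning F n_gt0.
have [v v_neq0 vJ] := exists_orthogonal_vector FJ.1.
have zerosE := zeros_orthogonal_vector FJ v_neq0 vJ.
exists v; split; last first.
  by apply: rob_largest_nonspanning FJ _; rewrite -zerosE; apply: largest_nonspanning_col.
have [i iJ] : exists i, i \notin J.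
  apply/existsP; apply: contraTT frameF; rewrite negb_exists => /forallP J_full.
  rewrite /is_frame (_ : setT = J) ?FJ.1 //.
  by apply/setP => i; rewrite inE; apply/esym/negbNE.
by rewrite /is_frame spans_col; apply/existsP; exists i; move: iJ; rewrite -zerosE !inE.
Qed.

Lemma coeffsR_mulmx (R : realFieldType) (k n : nat) (F : 'M[R]_(k, n)) (y : 'rV[R]_n) :
  coeffsR F y = F *m y^T.
Proof. by apply/matrixP => i j; rewrite !mxE; apply: eq_bigr => l _; rewrite !mxE ord1. Qed.

Lemma coeffsC_mulmx (C : numClosedFieldType) (k n : nat) (F : 'M[C]_(k, n)) (y : 'rV[C]_n) :
  coeffsC F y = F *m (map_mx Num.conj_op y)^T.
Proof. by apply/matrixP => i j; rewrite !mxE; apply: eq_bigr => l _; rewrite !mxE ord1. Qed.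

Theorem theorem2p3 :
  (forall (R : realFieldType) (n k : nat) (F : 'M[R]_(k, n)),
      (0 < n)%N -> is_frame F ->
      exists y : 'rV[R]_n, is_frame (coeffsR F y) /\ rob F = rob (coeffsR F y)) /\
  (forall (C : numClosedFieldType) (n k : nat) (F : 'M[C]_(k, n)),
      (0 < n)%N -> is_frame F ->
      exists y : 'rV[C]_n, is_frame (coeffsC F y) /\ rob F = rob (coeffsC F y)).
Proof.
split=> [R | C] n k F n_gt0 frameF;
  have [v robv] := exists_rob_preserving_functional n_gt0 frameF.
  by exists v^T; rewrite coeffsR_mulmx trmxK.
exists (map_mx Num.conj_op v)^T; rewrite coeffsC_mulmx map_trmx trmxK.
by rewrite (_ : map_mx _ (map_mx _ v) = v) //; apply/matrixP => i j; rewrite !mxE conjCK.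
Qed.
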